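(* Let $s>0$ and let $P:[0,\infty)\to\mathbb{R}$ be a $\mathcal{C}^2$ function with $P(x)>0$ for all $x>0$. Consider, for $x_0>0$ and $\gamma_0>0$, the initial value problem \[ \frac{d\gamma_1}{dx}=\frac{\gamma_1(x)+\gamma_1(x)^2-P(x)}{s\,x\,\gamma_1(x)},\qquad \gamma_1(x_0)=\gamma_0 . \] Then there exist positive global solutions of this initial value problem (i.e. there exist $x_0>0$ and $\gamma_0>0$ such that the solution exists and remains strictly positive for all $x\ge x_0$) if and only if \[ \int_{x_0}^{\infty}\frac{P(z)}{z^{1+2/s}}\,dz<\infty \] for some $x_0>0$.
   Context: Solutions are understood in the region $x>0$, $\gamma_1>0$, where the right-hand side is regular; for given initial data the solution is the unique maximal solution taking values in $(0,\infty)$. A solution is called global (for $x\to\infty$) if it can be continued, remaining strictly positive, to all $x\ge x_0$. *)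

From Stdlib Require Import Reals.
From Coquelicot Require Export Coquelicot.
Export Reals.
Open Scope R_scope.

Definition C2_on_nonneg (P : R -> R) : Prop :=
  forall x, 0 <= x ->
    ex_derive P x /\
    (exists eps : posreal, forall y, Rabs (y - x) < eps -> ex_derive P y /\
                                      ex_derive (Derive P) y) /\
    continuous (Derive_n P 2) x.

Definition ode_rhs (s : R) (P : R -> R) (x g : R) : R :=
  (g + g ^ 2 - P x) / (s * x * g).

Definition global_pos_solution (s : R) (P : R -> R) (x0 g0 : R) (gamma : R -> R) : Prop :=
  gamma x0 = g0 /\
  forall x, x0 <= x -> 0 < gamma x /\ is_derive gamma x (ode_rhs s P x (gamma x)).

From Stdlib Require Import Reals Lra Lia.
From Coquelicot Require Import Coquelicot.
Open Scope R_scope.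

(* Writing gamma = v z^(1/s) turns the equation into v' = a - b / v, where
   a = 1 / (s z^(1 + 1/s)) = -(z^(-1/s))' and b = P / (s z^(1 + 2/s)).

   If v > 0 solves it on [x0, oo), then v + z^(-1/s) is nonincreasing, so
   v <= M, and then (int_x1^x b) + v^2 / 2 + M z^(-1/s) is nonincreasing too,
   which bounds the integral of b.

   Conversely, if int_c^oo b <= 1/2, the Picard map
   w |-> 2 + int_c^x a - int_c^x b / w sends functions w >= 1 to functions
   >= 1 and halves their distance on every [c, x], since
   |1/w1 - 1/w2| <= |w1 - w2|; its iterates converge to a solution v >= 1. *)

Lemma continuous_Rmax_l (c t : R) : continuous (Rmax c) t.
Proof.
  apply continuity_pt_filterlim; intros eps Heps.
  exists eps; split; [exact Heps|]; intros u [_ Hu]; simpl in *; unfold R_dist in *.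
  eapply Rle_lt_trans; [|exact Hu].
  unfold Rmax; destruct (Rle_dec c u), (Rle_dec c t); unfold Rabs;
    repeat destruct Rcase_abs; lra.
Qed.

Lemma nonincreasing_of_derive_nonpos (f df : R -> R) (a : R) :
  (forall x, a <= x -> is_derive f x (df x)) -> (forall x, a <= x -> df x <= 0) ->
  forall x, a <= x -> f x <= f a.
Proof.
  intros Hf Hdf x Hx; destruct (Req_dec x a) as [->|Hne]; [lra|].
  destruct (MVT_cor3 f df a x) as (y & Hay & Hyx & Hmvt); [lra| |].
  - intros y Hay Hyx; apply is_derive_Reals, Hf; lra.
  - assert (df y * (x - a) <= 0) by (apply Rmult_le_0_r; [apply Hdf|]; lra); lra.
Qed.

Lemma is_derive_RInt_upper (f : R -> R) (l a x : R) :
  (forall t, l <= t -> continuous f t) -> l < a -> l < x ->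
  is_derive (fun y => RInt f a y) x (f x).
Proof.
  intros Hf Ha Hx; apply (is_derive_RInt f _ a); [|apply Hf; lra].
  apply filter_imp with (2 := open_gt l x Hx); intros y Hy.
  apply (RInt_correct (V := R_CompleteNormedModule)).
  apply (ex_RInt_continuous (V := R_CompleteNormedModule)).
  intros t Ht; apply Hf.
  assert (l < Rmin a y) by (apply Rmin_glb_lt; lra); lra.
Qed.

Lemma ex_RInt_of_continuous (f : R -> R) (l a b : R) :
  (forall t, l <= t -> continuous f t) -> l <= a -> l <= b -> ex_RInt f a b.
Proof.
  intros Hf Ha Hb; apply (ex_RInt_continuous (V := R_CompleteNormedModule)).
  intros t Ht; apply Hf; assert (l <= Rmin a b) by (apply Rmin_glb; lra); lra.
Qed.

Lemma RInt_nondecreasing (f : R -> R) (a b c : R) :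
  (forall t, a <= t -> continuous f t) -> (forall t, a <= t -> 0 <= f t) ->
  a <= b <= c -> RInt f a b <= RInt f a c.
Proof.
  intros Hf Hpos Hb.
  rewrite <- (RInt_Chasles f a b c) by (apply (ex_RInt_of_continuous f a _ _ Hf); lra).
  assert (0 <= RInt f b c).
  { apply RInt_ge_0; [lra | apply (ex_RInt_of_continuous f a _ _ Hf); lra |].
    intros t Ht; apply Hpos; lra. }
  change (plus (RInt f a b) (RInt f b c)) with (RInt f a b + RInt f b c); lra.
Qed.

Lemma ex_RInt_gen_of_bounded_nonneg (f : R -> R) (a K : R) :
  (forall t, a <= t -> continuous f t) -> (forall t, a <= t -> 0 <= f t) ->
  (forall x, a <= x -> RInt f a x <= K) ->
  ex_RInt_gen f (at_point a) (Rbar_locally p_infty).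
Proof.
  intros Hf Hpos HK.
  set (S := fun y => exists x, a <= x /\ y = RInt f a x).
  destruct (completeness S) as [l [Hub Hlub]].
  { exists K; intros y [x [Hx ->]]; apply HK; exact Hx. }
  { exists (RInt f a a), a; split; [lra | reflexivity]. }
  exists l; intros Q [eps Heps].
  assert (Hx1 : exists x1, a <= x1 /\ l - eps < RInt f a x1).
  { apply Classical_Pred_Type.not_all_not_ex; intros Hn.
    assert (l <= l - eps); [|destruct eps; simpl in *; lra].
    apply Hlub; intros y [x [Hx ->]]; apply Rnot_lt_le; intros Hlt; exact (Hn x (conj Hx Hlt)). }
  destruct Hx1 as [x1 [Hx1 Hlt]].
  apply (Filter_prod _ _ _ (fun u => u = a) (fun v => x1 < v)); [reflexivity | exists x1; auto |].
  intros u v -> Hv; exists (RInt f a v); split.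
  - apply (RInt_correct (V := R_CompleteNormedModule)), (ex_RInt_of_continuous f a _ _ Hf); lra.
  - apply Heps; unfold ball; simpl; unfold AbsRing_ball, abs, minus, plus, opp; simpl.
    assert (RInt f a x1 <= RInt f a v) by (apply RInt_nondecreasing; auto; lra).
    assert (RInt f a v <= l) by (apply Hub; exists v; split; [lra | reflexivity]).
    apply Rabs_def1; destruct eps; simpl in *; lra.
Qed.

Lemma ex_RInt_gen_scal (f : R -> R) (k : R) (Fa Fb : (R -> Prop) -> Prop) :
  Filter Fa -> Filter Fb ->
  ex_RInt_gen f Fa Fb -> ex_RInt_gen (fun z => k * f z) Fa Fb.
Proof. intros HFa HFb [l Hl]; exists (scal k l); exact (is_RInt_gen_scal f k l Hl). Qed.

Lemma RInt_tail_small (f : R -> R) (a : R) :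
  (forall t, a <= t -> continuous f t) ->
  ex_RInt_gen f (at_point a) (Rbar_locally p_infty) ->
  forall eps, 0 < eps -> exists c, a <= c /\ forall x, c <= x -> Rabs (RInt f c x) <= eps.
Proof.
  intros Hf [l Hl] eps Heps.
  destruct (Hl (ball l (pos_div_2 (mkposreal eps Heps)))) as [Qa Qb HQa [M HM] Hint];
    [apply locally_ball|].
  assert (Hnear : forall x, M < x -> Rabs (RInt f a x - l) < eps / 2).
  { intros x Hx; destruct (Hint a x HQa (HM x Hx)) as (y & Hy & Hball).
    simpl in Hy; rewrite (is_RInt_unique _ _ _ _ Hy); exact Hball. }
  set (c := Rmax a M + 1).
  assert (Hac : a < c) by (pose proof (Rmax_l a M); unfold c; lra).
  assert (HMc : M < c) by (pose proof (Rmax_r a M); unfold c; lra).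
  exists c; split; [lra|]; intros x Hx.
  assert (Hchasles := RInt_Chasles f a c x
    (ex_RInt_of_continuous f a a c Hf ltac:(lra) ltac:(lra))
    (ex_RInt_of_continuous f a c x Hf ltac:(lra) ltac:(lra))).
  change (RInt f a c + RInt f c x = RInt f a x) in Hchasles.
  pose proof (Hnear x ltac:(lra)); pose proof (Hnear c HMc).
  apply Rabs_le; split;
    repeat match goal with H : Rabs _ < _ |- _ => apply Rabs_def2 in H; destruct H end; lra.
Qed.

Lemma Rabs_sub_le_geometric (u : nat -> R) (K q : R) :
  0 <= q < 1 -> (forall n, Rabs (u (S n) - u n) <= K * q ^ n) ->
  forall n j, Rabs (u (n + j)%nat - u n) <= K * q ^ n / (1 - q).
Proof.
  intros Hq Hstep n.
  assert (HK : 0 <= K).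
  { specialize (Hstep O); pose proof (Rabs_pos (u 1%nat - u O)); simpl in Hstep; lra. }
  assert (Hpartial : forall j, Rabs (u (n + j)%nat - u n) <= K * (q ^ n - q ^ (n + j)) / (1 - q)).
  { induction j as [|j IH].
    - rewrite Nat.add_0_r, !Rminus_diag, Rabs_R0; unfold Rdiv; lra.
    - replace (u (n + S j)%nat - u n) with ((u (S (n + j)) - u (n + j)%nat) + (u (n + j)%nat - u n))
        by (rewrite Nat.add_succ_r; ring).
      replace (K * (q ^ n - q ^ (n + S j)) / (1 - q))
        with (K * q ^ (n + j) + K * (q ^ n - q ^ (n + j)) / (1 - q))
        by (rewrite Nat.add_succ_r; simpl; field; lra).
      eapply Rle_trans; [apply Rabs_triang|]; apply Rplus_le_compat; [apply Hstep | exact IH]. }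
  intros j; eapply Rle_trans; [apply Hpartial|]; unfold Rdiv.
  apply Rmult_le_compat_r; [apply Rlt_le, Rinv_0_lt_compat; lra|].
  pose proof (pow_le q (n + j) (proj1 Hq)); nra.
Qed.

Lemma geometric_cauchy_lim (u : nat -> R) (K q : R) :
  0 <= q < 1 -> (forall n, Rabs (u (S n) - u n) <= K * q ^ n) ->
  exists l : R, is_lim_seq u l /\ forall n, Rabs (l - u n) <= K * q ^ n / (1 - q).
Proof.
  intros Hq Hstep.
  set (e n := K * q ^ n / (1 - q)).
  assert (Htail : forall n j, Rabs (u (n + j)%nat - u n) <= e n)
    by exact (Rabs_sub_le_geometric u K q Hq Hstep).
  assert (He : is_lim_seq e 0).
  { replace (Finite 0) with (Rbar_mult (K / (1 - q)) 0) by (simpl; f_equal; ring).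
    apply is_lim_seq_ext with (fun n => K / (1 - q) * q ^ n); [intros n; unfold e; field; lra|].
    apply is_lim_seq_scal_l, is_lim_seq_geom; rewrite Rabs_right; lra. }
  assert (Hcv : ex_finite_lim_seq u).
  { apply ex_lim_seq_cauchy_corr; intros eps.
    destruct (proj2 (is_lim_seq_spec e 0) He (pos_div_2 eps)) as [N HN].
    exists N; intros n m Hn Hm.
    specialize (HN N (Nat.le_refl N)); simpl in HN; rewrite Rminus_0_r in HN.
    pose proof (Rle_abs (e N)).
    pose proof (Htail N (n - N)%nat); pose proof (Htail N (m - N)%nat).
    replace (N + (n - N))%nat with n in * by lia; replace (N + (m - N))%nat with m in * by lia.
    apply Rabs_def1;
      repeat match goal with H : Rabs _ <= _ |- _ => apply Rabs_le_between in H; destruct H end;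
      lra. }
  destruct Hcv as [l Hl]; exists l; split; [exact Hl|]; intros n.
  apply (is_lim_seq_incr_n _ n) in Hl.
  assert (Hlim := is_lim_seq_abs _ _ (is_lim_seq_minus' _ _ _ _ Hl (is_lim_seq_const (u n)))).
  refine (is_lim_seq_le _ _ _ (Finite (e n)) _ Hlim (is_lim_seq_const _)).
  intros j; rewrite Nat.add_comm; apply Htail.
Qed.

Lemma eq_0_of_le_geom (d K q : R) :
  Rabs q < 1 -> (forall n, Rabs d <= K * q ^ n) -> d = 0.
Proof.
  intros Hq Hd; apply Rabs_eq_0, Rle_antisym; [|apply Rabs_pos].
  assert (Hlim : is_lim_seq (fun n => K * q ^ n) (Rbar_mult K 0)).
  { apply is_lim_seq_scal_l, is_lim_seq_geom; exact Hq. }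
  assert (Hle := is_lim_seq_le _ _ (Finite (Rabs d)) _ Hd (is_lim_seq_const _) Hlim).
  simpl in Hle; rewrite Rmult_0_r in Hle; exact Hle.
Qed.

Lemma continuous_of_uniform_approx (f : R -> R) (g : nat -> R -> R) (e : nat -> R) :
  (forall n x, continuous (g n) x) -> (forall n x, Rabs (f x - g n x) <= e n) ->
  is_lim_seq e 0 -> forall x, continuous f x.
Proof.
  intros Hg Happrox He x; apply continuity_pt_filterlim.
  apply (CVU_continuity g f x (mkposreal 1 Rlt_0_1)).
  - intros eps Heps.
    destruct (proj2 (is_lim_seq_spec e 0) He (mkposreal eps Heps)) as [N HN].
    exists N; intros n y Hn _.
    specialize (HN n Hn); simpl in HN; rewrite Rminus_0_r in HN.
    eapply Rle_lt_trans; [apply Happrox|]; eapply Rle_lt_trans; [apply Rle_abs | exact HN].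
  - intros n y _; apply continuity_pt_filterlim, Hg.
  - unfold Boule; simpl; rewrite Rminus_diag, Rabs_R0; lra.
Qed.

Lemma Rabs_Rinv_sub_le (u w : R) : 1 <= u -> 1 <= w -> Rabs (/ w - / u) <= Rabs (u - w).
Proof.
  intros Hu Hw; assert (Huw : 1 <= u * w) by nra.
  replace (/ w - / u) with ((u - w) / (u * w)) by (field; lra).
  rewrite Rabs_div, (Rabs_right (u * w)) by lra.
  apply Rmult_le_reg_r with (u * w); [lra|]; unfold Rdiv.
  rewrite Rmult_assoc, Rinv_l by lra; pose proof (Rabs_pos (u - w)); nra.
Qed.

Section Picard.

Variables (a b : R -> R) (c : R).
Hypothesis a_cont : forall t, c <= t -> continuous a t.
Hypothesis a_ge0 : forall t, c <= t -> 0 <= a t.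
Hypothesis b_cont : forall t, c <= t -> continuous b t.
Hypothesis b_ge0 : forall t, c <= t -> 0 <= b t.
Hypothesis RInt_b_le : forall x, c <= x -> RInt b c x <= / 2.

(* Functions are extended to the left of c by their value at c, so that every
   integrand below is continuous on all of R. *)
Let clamp (f : R -> R) (t : R) := f (Rmax c t).

Lemma continuous_clamp (f : R -> R) :
  (forall t, c <= t -> continuous f t) -> forall t, continuous (clamp f) t.
Proof.
  intros Hf t; apply (continuous_comp (Rmax c) f); [apply continuous_Rmax_l|].
  apply Hf, Rmax_l.
Qed.

Lemma ex_RInt_clamp (f : R -> R) x y :
  (forall t, c <= t -> continuous f t) -> ex_RInt (clamp f) x y.
Proof.
  intros Hf; apply (ex_RInt_continuous (V := R_CompleteNormedModule)).
  intros t _; apply continuous_clamp, Hf.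
Qed.

Definition admissible (w : R -> R) : Prop :=
  (forall t, continuous (clamp w) t) /\ (forall t, c <= t -> 1 <= w t).

Definition picard_start (x : R) : R := 2 + RInt (clamp a) c x.

Let quot (w : R -> R) (t : R) := clamp b t / clamp w t.

Definition picard (w : R -> R) (x : R) : R := picard_start x - RInt (quot w) c x.

Lemma continuous_quot w : admissible w -> forall t, continuous (quot w) t.
Proof.
  intros [Hw Hw1] t; apply (continuous_mult (clamp b) (fun t => / clamp w t)).
  - apply continuous_clamp, b_cont.
  - apply continuous_Rinv_comp; [apply Hw|].
    assert (1 <= clamp w t) by (apply Hw1, Rmax_l); lra.
Qed.

Lemma quot_bounds w t : admissible w -> c <= t -> 0 <= quot w t <= b t.
Proof.
  intros [_ Hw1] Ht; unfold quot, clamp; rewrite Rmax_right by exact Ht.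
  pose proof (b_ge0 t Ht); pose proof (Hw1 t Ht).
  split; [apply Rdiv_le_0_compat; lra|].
  apply Rmult_le_reg_r with (w t); [lra|]; unfold Rdiv; rewrite Rmult_assoc, Rinv_l by lra; nra.
Qed.

Lemma RInt_quot_bounds w x : admissible w -> c <= x -> 0 <= RInt (quot w) c x <= / 2.
Proof.
  intros Hw Hx.
  assert (Hex : ex_RInt (quot w) c x).
  { apply (ex_RInt_continuous (V := R_CompleteNormedModule)).
    intros t _; apply continuous_quot, Hw. }
  split.
  - apply RInt_ge_0; [exact Hx | exact Hex |]; intros t Ht; apply quot_bounds; [exact Hw | lra].
  - eapply Rle_trans; [|apply (RInt_b_le x Hx)].
    apply RInt_le; [exact Hx | exact Hex | apply (ex_RInt_of_continuous b c _ _ b_cont); lra |].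
    intros t Ht; apply quot_bounds; [exact Hw | lra].
Qed.

Lemma picard_start_ge x : c <= x -> 2 <= picard_start x.
Proof.
  intros Hx; unfold picard_start.
  assert (0 <= RInt (clamp a) c x); [|lra].
  apply RInt_ge_0; [exact Hx | apply ex_RInt_clamp, a_cont |].
  intros t _; apply a_ge0, Rmax_l.
Qed.

Lemma continuous_clamp_RInt (f : R -> R) :
  (forall t, continuous f t) -> forall t, continuous (clamp (fun x => RInt f c x)) t.
Proof.
  intros Hf; apply continuous_clamp; intros t _.
  apply (ex_derive_continuous (K := R_AbsRing) (V := R_NormedModule)); exists (f t).
  apply (is_derive_RInt_upper f (Rmin c t - 1)); [intros; apply Hf | |];
    pose proof (Rmin_l c t); pose proof (Rmin_r c t); lra.
Qed.

Lemma picard_start_admissible : admissible picard_start.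
Proof.
  split; [|intros t Ht; pose proof (picard_start_ge t Ht); lra].
  intros t; apply (continuous_plus (fun _ => 2) (clamp (fun x => RInt (clamp a) c x)));
    [apply continuous_const | apply continuous_clamp_RInt, continuous_clamp, a_cont].
Qed.

Lemma picard_admissible w : admissible w -> admissible (picard w).
Proof.
  intros Hw; split.
  - intros t; apply (continuous_minus (clamp picard_start) (clamp (fun x => RInt (quot w) c x))).
    + apply picard_start_admissible.
    + apply continuous_clamp_RInt, continuous_quot, Hw.
  - intros t Ht; unfold picard.
    pose proof (picard_start_ge t Ht); pose proof (RInt_quot_bounds w t Hw Ht); lra.
Qed.

Lemma Rabs_quot_sub_le w1 w2 t D : admissible w1 -> admissible w2 -> c <= t ->
  Rabs (w1 t - w2 t) <= D -> Rabs (quot w2 t - quot w1 t) <= D * b t.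
Proof.
  intros [_ Hw1] [_ Hw2] Ht HD; unfold quot, clamp; rewrite Rmax_right by exact Ht.
  replace (b t / w2 t - b t / w1 t) with (b t * (/ w2 t - / w1 t)) by (unfold Rdiv; ring).
  rewrite Rabs_mult, (Rabs_right (b t)) by (apply Rle_ge, b_ge0, Ht).
  rewrite (Rmult_comm D); apply Rmult_le_compat_l; [apply b_ge0, Ht|].
  eapply Rle_trans; [apply Rabs_Rinv_sub_le; [apply Hw1 | apply Hw2]; exact Ht | exact HD].
Qed.

Lemma picard_contraction w1 w2 x D : admissible w1 -> admissible w2 -> c <= x ->
  (forall t, c <= t <= x -> Rabs (w1 t - w2 t) <= D) ->
  Rabs (picard w1 x - picard w2 x) <= D / 2.
Proof.
  intros Hw1 Hw2 Hx HD.
  assert (HD0 : 0 <= D) by (eapply Rle_trans; [apply Rabs_pos | apply (HD x)]; lra).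
  set (h t := quot w2 t - quot w1 t).
  assert (Hex : forall f : R -> R, (forall t, continuous f t) -> ex_RInt f c x).
  { intros f Hf; apply (ex_RInt_continuous (V := R_CompleteNormedModule)); intros t _; apply Hf. }
  assert (Hh : forall t, continuous h t).
  { intros t; apply (continuous_minus (quot w2) (quot w1)); apply continuous_quot; assumption. }
  assert (Hexb : ex_RInt b c x) by (apply (ex_RInt_of_continuous b c _ _ b_cont); lra).
  replace (picard w1 x - picard w2 x) with (RInt h c x).
  2:{ unfold picard, h; rewrite (RInt_minus (V := R_CompleteNormedModule))
        by (apply Hex, continuous_quot; assumption).
      change (RInt (quot w2) c x - RInt (quot w1) c x =
              picard_start x - RInt (quot w1) c x - (picard_start x - RInt (quot w2) c x)); ring. }
  eapply Rle_trans; [apply abs_RInt_le; [exact Hx | apply Hex, Hh]|].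
  eapply Rle_trans; [apply (RInt_le _ (fun t => D * b t))|].
  - exact Hx.
  - apply Hex; intros t; apply continuous_Rabs_comp, Hh.
  - apply (ex_RInt_scal (V := R_CompleteNormedModule)), Hexb.
  - intros t Ht; apply Rabs_quot_sub_le; [exact Hw1 | exact Hw2 | lra | apply HD; lra].
  - rewrite (RInt_scal (V := R_CompleteNormedModule)) by exact Hexb.
    change (D * RInt b c x <= D / 2).
    pose proof (RInt_b_le x Hx); nra.
Qed.

Fixpoint picard_iter (n : nat) : R -> R :=
  match n with O => picard_start | S n => picard (picard_iter n) end.

Lemma picard_iter_admissible n : admissible (picard_iter n).
Proof.
  induction n as [|n IH]; [apply picard_start_admissible | apply picard_admissible, IH].
Qed.

Lemma picard_iter_step n t : c <= t ->
  Rabs (picard_iter (S n) t - picard_iter n t) <= / 2 * (/ 2) ^ n.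
Proof.
  revert t; induction n as [|n IH]; intros t Ht.
  - simpl; unfold picard.
    pose proof (RInt_quot_bounds picard_start t picard_start_admissible Ht).
    rewrite Rabs_left1; lra.
  - change (Rabs (picard (picard_iter (S n)) t - picard (picard_iter n) t) <= / 2 * (/ 2) ^ S n).
    eapply Rle_trans; [apply picard_contraction; try apply picard_iter_admissible; [exact Ht|]|].
    + intros u Hu; apply IH; lra.
    + simpl; lra.
Qed.

Definition picard_lim (t : R) : R := real (Lim_seq (fun n => picard_iter n t)).

Lemma picard_lim_spec t : c <= t ->
  is_lim_seq (fun n => picard_iter n t) (picard_lim t) /\
  forall n, Rabs (picard_lim t - picard_iter n t) <= (/ 2) ^ n.
Proof.
  intros Ht.
  destruct (geometric_cauchy_lim (fun n => picard_iter n t) (/ 2) (/ 2)) as (l & Hl & Hbound).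
  - lra.
  - intros n; apply picard_iter_step, Ht.
  - unfold picard_lim; rewrite (is_lim_seq_unique _ _ Hl); split; [exact Hl|].
    intros n; eapply Rle_trans; [apply Hbound|]; right; field.
Qed.

Lemma picard_lim_admissible : admissible picard_lim.
Proof.
  split.
  - apply (continuous_of_uniform_approx _ (fun n => clamp (picard_iter n)) (fun n => (/ 2) ^ n)).
    + intros n; apply picard_iter_admissible.
    + intros n t; exact (proj2 (picard_lim_spec (Rmax c t) (Rmax_l c t)) n).
    + apply is_lim_seq_geom; rewrite Rabs_right; lra.
  - intros t Ht; destruct (picard_lim_spec t Ht) as [Hl _].
    refine (is_lim_seq_le (fun _ => 1) _ 1 _ _ (is_lim_seq_const 1) Hl).
    intros n; apply picard_iter_admissible, Ht.
Qed.

Lemma picard_lim_fixed x : c <= x -> picard_lim x = picard picard_lim x.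
Proof.
  intros Hx; apply Rminus_diag_uniq, (eq_0_of_le_geom _ 1 (/ 2)); [rewrite Rabs_right; lra|].
  intros n.
  assert (Hnext := proj2 (picard_lim_spec x Hx) (S n)).
  assert (Hcontr : Rabs (picard (picard_iter n) x - picard picard_lim x) <= (/ 2) ^ n / 2).
  { apply picard_contraction;
      [apply picard_iter_admissible | apply picard_lim_admissible | exact Hx |].
    intros t Ht; rewrite Rabs_minus_sym; apply picard_lim_spec; lra. }
  change (picard_iter (S n) x) with (picard (picard_iter n) x) in Hnext; simpl in Hnext.
  apply Rabs_le_between in Hnext; apply Rabs_le_between in Hcontr; apply Rabs_le; lra.
Qed.

Lemma picard_lim_derive x : c < x -> is_derive picard_lim x (a x - b x / picard_lim x).
Proof.
  intros Hx.
  apply is_derive_ext_loc with (f := picard picard_lim).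
  { apply filter_imp with (2 := open_gt c x Hx); intros t Ht.
    symmetry; apply picard_lim_fixed; lra. }
  assert (Hclamp : forall f : R -> R, clamp f x = f x)
    by (intros f; unfold clamp; rewrite Rmax_right; lra).
  rewrite <- (Hclamp a), <- (Hclamp b), <- (Hclamp picard_lim).
  change (clamp b x / clamp picard_lim x) with (quot picard_lim x).
  replace (clamp a x - quot picard_lim x) with (0 + clamp a x - quot picard_lim x) by ring.
  apply (is_derive_minus picard_start (fun y => RInt (quot picard_lim) c y)).
  - apply (is_derive_plus (fun _ => 2) (fun y => RInt (clamp a) c y)).
    + apply (is_derive_const (K := R_AbsRing) (V := R_NormedModule)).
    + apply (is_derive_RInt_upper _ (c - 1)); [|lra|lra].
      intros t _; apply continuous_clamp, a_cont.
  - apply (is_derive_RInt_upper _ (c - 1)); [|lra|lra].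
    intros t _; apply continuous_quot, picard_lim_admissible.
Qed.

Lemma exists_solution_ge1 :
  exists v : R -> R, forall x, c < x -> 1 <= v x /\ is_derive v x (a x - b x / v x).
Proof.
  exists picard_lim; intros x Hx; split;
    [apply picard_lim_admissible; lra | apply picard_lim_derive, Hx].
Qed.

End Picard.

Section Lyapunov.

Variables (a b phi v : R -> R) (x0 : R).
Hypothesis phi_derive : forall x, x0 <= x -> is_derive phi x (- a x).
Hypothesis phi_pos : forall x, x0 <= x -> 0 < phi x.
Hypothesis a_ge0 : forall x, x0 <= x -> 0 <= a x.
Hypothesis b_cont : forall x, x0 <= x -> continuous b x.
Hypothesis b_ge0 : forall x, x0 <= x -> 0 <= b x.
Hypothesis v_pos : forall x, x0 <= x -> 0 < v x.
Hypothesis v_derive : forall x, x0 <= x -> is_derive v x (a x - b x / v x).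

Lemma solution_le_start x : x0 <= x -> v x <= v x0 + phi x0.
Proof.
  intros Hx.
  assert (Hdecr : v x + phi x <= v x0 + phi x0).
  { apply (nonincreasing_of_derive_nonpos (fun y => v y + phi y) (fun y => - (b y / v y)));
      [| |exact Hx].
    - intros y Hy; replace (- (b y / v y)) with ((a y - b y / v y) + - a y) by ring.
      apply (is_derive_plus v phi); [apply v_derive | apply phi_derive]; exact Hy.
    - intros y Hy; pose proof (b_ge0 y Hy); pose proof (v_pos y Hy).
      assert (0 <= b y / v y) by (apply Rdiv_le_0_compat; lra); lra. }
  pose proof (phi_pos x Hx); lra.
Qed.

Lemma RInt_le_of_solution x1 x : x0 < x1 -> x1 <= x ->
  RInt b x1 x <= v x1 ^ 2 / 2 + (v x0 + phi x0) * phi x1.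
Proof.
  intros Hx1 Hx; set (M := v x0 + phi x0).
  set (G y := RInt b x1 y + v y ^ 2 / 2 + M * phi y).
  assert (HG : G x <= G x1).
  { apply (nonincreasing_of_derive_nonpos G (fun y => (v y - M) * a y)); [| |exact Hx].
    - intros y Hy.
      replace ((v y - M) * a y)
        with (b y + / 2 * (INR 2 * (a y - b y / v y) * v y ^ Nat.pred 2) + M * - a y)
        by (simpl; field; pose proof (v_pos y ltac:(lra)); lra).
      apply (is_derive_plus (fun y => RInt b x1 y + v y ^ 2 / 2) (fun y => M * phi y));
        [apply (is_derive_plus (fun y => RInt b x1 y) (fun y => v y ^ 2 / 2))|].
      + apply (is_derive_RInt_upper b x0); [exact b_cont | lra | lra].
      + apply (is_derive_ext (fun y => / 2 * v y ^ 2)).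
        { intros t; change (/ 2 * v t ^ 2 = v t ^ 2 / 2); field. }
        apply is_derive_scal, is_derive_pow, v_derive; lra.
      + apply is_derive_scal, phi_derive; lra.
    - intros y Hy; pose proof (solution_le_start y ltac:(lra)); pose proof (a_ge0 y ltac:(lra)).
      unfold M; nra. }
  assert (0 <= v x ^ 2 / 2) by (pose proof (pow2_ge_0 (v x)); lra).
  assert (0 <= M * phi x).
  { pose proof (v_pos x0 (Rle_refl x0)); pose proof (phi_pos x0 (Rle_refl x0)).
    pose proof (phi_pos x ltac:(lra)); unfold M; nra. }
  unfold G in HG; rewrite RInt_point in HG.
  change zero with 0 in HG; lra.
Qed.

End Lyapunov.

Lemma is_derive_Rpower (r x : R) : 0 < x ->
  is_derive (fun z => Rpower z r) x (r * Rpower x r / x).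
Proof.
  intros Hx; apply is_derive_Reals.
  replace (r * Rpower x r / x) with (r * Rpower x (r - 1)); [apply derivable_pt_lim_power, Hx|].
  unfold Rminus; rewrite Rpower_plus, Rpower_Ropp, Rpower_1 by exact Hx; unfold Rdiv; ring.
Qed.

Lemma continuous_Rpower (r x : R) : 0 < x -> continuous (fun z => Rpower z r) x.
Proof.
  intros Hx; apply (ex_derive_continuous (K := R_AbsRing) (V := R_NormedModule)).
  eexists; apply is_derive_Rpower, Hx.
Qed.

Lemma Rpower_one_plus_two_div (s z : R) : s <> 0 -> 0 < z ->
  Rpower z (1 + 2 / s) = z * Rpower z (/ s) ^ 2.
Proof.
  intros Hs Hz; replace (2 / s) with (/ s + / s) by (field; exact Hs).
  rewrite !Rpower_plus, Rpower_1 by exact Hz; ring.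
Qed.

Lemma Rpower_pos (x r : R) : 0 < Rpower x r.
Proof. apply exp_pos. Qed.

Definition rescaled_a (s z : R) : R := / (s * z * Rpower z (/ s)).
Definition rescaled_b (s : R) (P : R -> R) (z : R) : R := P z / Rpower z (1 + 2 / s) / s.

Lemma rescaled_a_pos s z : 0 < s -> 0 < z -> 0 < rescaled_a s z.
Proof.
  intros Hs Hz; pose proof (Rpower_pos z (/ s)).
  apply Rinv_0_lt_compat; repeat apply Rmult_lt_0_compat; assumption.
Qed.

Lemma continuous_rescaled_a s z : 0 < s -> 0 < z -> continuous (rescaled_a s) z.
Proof.
  intros Hs Hz; pose proof (Rpower_pos z (/ s)).
  apply continuous_Rinv_comp; [|apply Rgt_not_eq; repeat apply Rmult_lt_0_compat; assumption].
  apply (continuous_mult (fun z => s * z) (fun z => Rpower z (/ s)));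
    [|apply continuous_Rpower, Hz].
  apply (continuous_mult (fun _ => s) (fun z => z)); [apply continuous_const | apply continuous_id].
Qed.

Lemma rescaled_b_pos s P z : 0 < s -> 0 < P z -> 0 < rescaled_b s P z.
Proof.
  intros Hs HP; pose proof (Rpower_pos z (1 + 2 / s)).
  unfold rescaled_b; repeat apply Rdiv_lt_0_compat; assumption.
Qed.

Lemma continuous_rescaled_b s P z : 0 < z -> continuous P z -> continuous (rescaled_b s P) z.
Proof.
  intros Hz HP; pose proof (Rpower_pos z (1 + 2 / s)).
  apply (continuous_mult (fun z => P z / Rpower z (1 + 2 / s)) (fun _ => / s));
    [|apply continuous_const].
  apply (continuous_mult P (fun z => / Rpower z (1 + 2 / s))); [exact HP|].
  apply continuous_Rinv_comp; [apply continuous_Rpower, Hz | lra].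
Qed.

Lemma is_derive_inv_Rpower s x : 0 < s -> 0 < x ->
  is_derive (fun z => / Rpower z (/ s)) x (- rescaled_a s x).
Proof.
  intros Hs Hx; pose proof (Rpower_pos x (/ s)).
  replace (- rescaled_a s x) with (- (/ s * Rpower x (/ s) / x) / Rpower x (/ s) ^ 2)
    by (unfold rescaled_a; field; repeat split; lra).
  apply (is_derive_inv (fun z => Rpower z (/ s))); [apply is_derive_Rpower, Hx | lra].
Qed.

Lemma rescaled_eq_solution s P x v : 0 < s -> 0 < x -> 0 < v ->
  ode_rhs s P x (v * Rpower x (/ s))
  = (rescaled_a s x - rescaled_b s P x / v) * Rpower x (/ s) + v * (/ s * Rpower x (/ s) / x).
Proof.
  intros Hs Hx Hv; pose proof (Rpower_pos x (/ s)).
  unfold ode_rhs, rescaled_a, rescaled_b; rewrite Rpower_one_plus_two_div by lra.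
  field; repeat split; lra.
Qed.

Lemma is_derive_solution_of_rescaled s P v x : 0 < s -> 0 < x -> 0 < v x ->
  is_derive v x (rescaled_a s x - rescaled_b s P x / v x) ->
  is_derive (fun z => v z * Rpower z (/ s)) x (ode_rhs s P x (v x * Rpower x (/ s))).
Proof.
  intros Hs Hx Hv Hd; rewrite rescaled_eq_solution by assumption.
  apply (is_derive_mult v (fun z => Rpower z (/ s)));
    [exact Hd | apply is_derive_Rpower, Hx | apply Rmult_comm].
Qed.

Lemma is_derive_rescaled_of_solution s P gamma x : 0 < s -> 0 < x -> 0 < gamma x ->
  is_derive gamma x (ode_rhs s P x (gamma x)) ->
  is_derive (fun z => gamma z / Rpower z (/ s)) x
    (rescaled_a s x - rescaled_b s P x / (gamma x / Rpower x (/ s))).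
Proof.
  intros Hs Hx Hg Hd; pose proof (Rpower_pos x (/ s)).
  set (v := gamma x / Rpower x (/ s)).
  assert (Hv : 0 < v) by (apply Rdiv_lt_0_compat; assumption).
  assert (Hrhs : ode_rhs s P x (gamma x) = (rescaled_a s x - rescaled_b s P x / v) * Rpower x (/ s)
                                           + v * (/ s * Rpower x (/ s) / x)).
  { rewrite <- rescaled_eq_solution by assumption; f_equal; unfold v; field; lra. }
  rewrite Hrhs in Hd.
  replace (rescaled_a s x - rescaled_b s P x / v) with
    ((((rescaled_a s x - rescaled_b s P x / v) * Rpower x (/ s) + v * (/ s * Rpower x (/ s) / x))
       * Rpower x (/ s) - gamma x * (/ s * Rpower x (/ s) / x)) / Rpower x (/ s) ^ 2)
    by (unfold v; field; split; lra).
  apply (is_derive_div gamma (fun z => Rpower z (/ s)));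
    [exact Hd | apply is_derive_Rpower, Hx | lra].
Qed.

Lemma ex_RInt_gen_rescaled_b_iff s P x0 : s <> 0 ->
  ex_RInt_gen (fun z => P z / Rpower z (1 + 2 / s)) (at_point x0) (Rbar_locally p_infty) <->
  ex_RInt_gen (rescaled_b s P) (at_point x0) (Rbar_locally p_infty).
Proof.
  intros Hs; split; intros Hint.
  - apply (ex_RInt_gen_ext_eq (fun z => / s * (P z / Rpower z (1 + 2 / s)))),
      ex_RInt_gen_scal; try apply _; [|exact Hint].
    intros z; apply Rmult_comm.
  - apply (ex_RInt_gen_ext_eq (fun z => s * rescaled_b s P z)),
      ex_RInt_gen_scal; try apply _; [|exact Hint].
    intros z; change (s * (P z / Rpower z (1 + 2 / s) / s) = P z / Rpower z (1 + 2 / s)).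
    pose proof (Rpower_pos z (1 + 2 / s)); field; lra.
Qed.

Lemma integrable_of_global_solution s P x0 g0 gamma : 0 < s ->
  (forall z, 0 < z -> continuous P z) -> (forall z, 0 < z -> 0 < P z) -> 0 < x0 ->
  global_pos_solution s P x0 g0 gamma ->
  ex_RInt_gen (rescaled_b s P) (at_point (x0 + 1)) (Rbar_locally p_infty).
Proof.
  intros Hs HPc HP Hx0 [_ Hsol].
  set (v z := gamma z / Rpower z (/ s)); set (phi z := / Rpower z (/ s)).
  apply (ex_RInt_gen_of_bounded_nonneg _ (x0 + 1)
    (v (x0 + 1) ^ 2 / 2 + (v x0 + phi x0) * phi (x0 + 1))).
  - intros z Hz; apply continuous_rescaled_b, HPc; lra.
  - intros z Hz; apply Rlt_le, rescaled_b_pos, HP; lra.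
  - intros x Hx; apply (RInt_le_of_solution (rescaled_a s) _ phi v x0); try lra.
    + intros z Hz; apply is_derive_inv_Rpower; lra.
    + intros z Hz; apply Rinv_0_lt_compat, Rpower_pos.
    + intros z Hz; apply Rlt_le, rescaled_a_pos; lra.
    + intros z Hz; apply continuous_rescaled_b, HPc; lra.
    + intros z Hz; apply Rlt_le, rescaled_b_pos, HP; lra.
    + intros z Hz; apply Rdiv_lt_0_compat; [apply Hsol, Hz | apply Rpower_pos].
    + intros z Hz; destruct (Hsol z Hz) as [Hpos Hd].
      apply is_derive_rescaled_of_solution; [exact Hs | lra | exact Hpos | exact Hd].
Qed.

Lemma global_solution_of_integrable s P x0 : 0 < s ->
  (forall z, 0 < z -> continuous P z) -> (forall z, 0 < z -> 0 < P z) -> 0 < x0 ->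
  ex_RInt_gen (rescaled_b s P) (at_point x0) (Rbar_locally p_infty) ->
  exists x1 g1 : R, 0 < x1 /\ 0 < g1 /\ exists gamma, global_pos_solution s P x1 g1 gamma.
Proof.
  intros Hs HPc HP Hx0 Hint.
  assert (Hb_cont : forall z, x0 <= z -> continuous (rescaled_b s P) z)
    by (intros z Hz; apply continuous_rescaled_b, HPc; lra).
  destruct (RInt_tail_small _ x0 Hb_cont Hint (/ 2)) as (c & Hc & Htail); [lra|].
  destruct (exists_solution_ge1 (rescaled_a s) (rescaled_b s P) c) as [v Hv].
  - intros z Hz; apply continuous_rescaled_a; lra.
  - intros z Hz; apply Rlt_le, rescaled_a_pos; lra.
  - intros z Hz; apply Hb_cont; lra.
  - intros z Hz; apply Rlt_le, rescaled_b_pos, HP; lra.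
  - intros x Hx; specialize (Htail x Hx); apply Rabs_le_between in Htail; lra.
  - assert (Hpos : forall x, c < x -> 0 < v x * Rpower x (/ s))
      by (intros x Hx; pose proof (proj1 (Hv x Hx)); pose proof (Rpower_pos x (/ s)); nra).
    exists (c + 1), (v (c + 1) * Rpower (c + 1) (/ s)); split; [lra | split; [apply Hpos; lra|]].
    exists (fun z => v z * Rpower z (/ s)); split; [reflexivity|].
    intros x Hx; destruct (Hv x ltac:(lra)) as [Hv1 Hd]; split; [apply Hpos; lra|].
    apply is_derive_solution_of_rescaled; [exact Hs | lra | lra | exact Hd].
Qed.

Theorem theorem1 (s : R) (P : R -> R) :
  0 < s ->
  C2_on_nonneg P ->
  (forall x, 0 < x -> 0 < P x) ->
  ((exists x0 g0 : R, 0 < x0 /\ 0 < g0 /\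
      exists gamma : R -> R, global_pos_solution s P x0 g0 gamma)
   <->
   (exists x0 : R, 0 < x0 /\
      ex_RInt_gen (fun z => P z / Rpower z (1 + 2 / s))
                  (at_point x0) (Rbar_locally p_infty))).
Proof.
  intros Hs HC HP.
  assert (HPc : forall z, 0 < z -> continuous P z).
  { intros z Hz; apply (ex_derive_continuous (K := R_AbsRing) (V := R_NormedModule)), HC; lra. }
  assert (Hs0 : s <> 0) by lra.
  split.
  - intros (x0 & g0 & Hx0 & _ & gamma & Hsol); exists (x0 + 1); split; [lra|].
    apply (ex_RInt_gen_rescaled_b_iff s P (x0 + 1) Hs0).
    exact (integrable_of_global_solution s P x0 g0 gamma Hs HPc HP Hx0 Hsol).
  - intros (x0 & Hx0 & Hint).
    apply (global_solution_of_integrable s P x0 Hs HPc HP Hx0).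
    exact (proj1 (ex_RInt_gen_rescaled_b_iff s P x0 Hs0) Hint).
Qed.
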